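(* Let $K=\mathbb{Z}/3$ and let $G=\mathcal{C}_{2\ell}$ be a cycle of length $s=2\ell$ ($\ell\ge2$). Then $$\dim_K C_X(d)=\begin{cases}2^{s-2}, & \text{if } d\ge \ell-1,\\[2pt] \sum_{i\ge0}\binom{s}{d-2i}, & \text{if } 0\le d\le \ell-2,\end{cases}$$ where $\binom{s}{k}=0$ for $k<0$.
   Context: Let $G$ have vertex set $\{1,\dots,n\}$ and edges $e_1,\dots,e_s$, identified with variables of $S=K[t_1,\dots,t_s]$, $K$ a finite field. Let $X\subseteq\mathbb{P}^{s-1}$ be the image of the projective torus $\{(x_1:\dots:x_n): x_i\neq0\}\subseteq\mathbb{P}^{n-1}$ under the map whose $k$-th coordinate is $x_ix_j$ when $e_k=\{i,j\}$. Order $X=\{P_1,\dots,P_m\}$. For $d\ge0$, $C_X(d)\subseteq K^m$ is the image of the space $S_d$ of degree-$d$ forms under $f\mapsto \big(f(P_1)/t_1^d(P_1),\dots,f(P_m)/t_1^d(P_m)\big)$. *)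

From HB Require Import structures.
From mathcomp Require Import all_boot all_algebra all_field.
From mathcomp Require Import mpoly.
Set Implicit Arguments. Unset Strict Implicit. Unset Printing Implicit Defensive.
Import GRing.Theory.
Local Open Scope ring_scope.

Notation K := 'F_3.

(* The cycle C_s on vertices 'I_s (0,...,s-1 in cyclic order);
   edge e_k = {k, k+1 mod s}.  The monomial map sends x to the vector
   (x_k * x_{k+1 mod s})_k. *)
(* s = n.+1 (in the theorem s = l.*2 >= 4, n = s.-1) *)
Definition cycle_vec (n : nat) (x : 'I_n.+1 -> K) : 'rV[K]_n.+1 :=
  \row_(k < n.+1) (x k * x (inZp k.+1 : 'I_n.+1)).

(* projective point of P^{s-1}(K) represented by a nonzero vector v:
   its class under scaling by nonzero scalars *)
Definition pclass (s : nat) (v : 'rV[K]_s) : {set 'rV[K]_s} :=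
  [set w | [exists c : K, (c != 0) && (w == c *: v)]].

Definition Xcyc (n : nat) : {set {set 'rV[K]_n.+1}} :=
  [set pclass (cycle_vec (fun i => x 0 i)) | x : 'rV[K]_n.+1 & [forall i, x 0 i != 0]].

Definition prep (s : nat) (P : {set 'rV[K]_s}) : 'rV[K]_s := odflt 0 [pick v in P].

Definition evX (n d : nat) (f : {mpoly K[n.+1]}) : 'rV[K]_#|Xcyc n| :=
  \row_(i < #|Xcyc n|)
    (let v := prep (enum_val i) in
     f.@[fun k => v 0 k] / (v 0 0) ^+ d).

Definition in_CX (n d : nat) (c : 'rV[K]_#|Xcyc n|) : Prop :=
  exists f : {mpoly K[n.+1]}, f \is d.-homog /\ c = evX d f.

From HB Require Import structures.
From mathcomp Require Import all_boot all_algebra all_field.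
From mathcomp Require Import mpoly.
From mathcomp Require Import zify.
Set Implicit Arguments. Unset Strict Implicit. Unset Printing Implicit Defensive.
Import GRing.Theory.
Local Open Scope ring_scope.

(* Over F_3 every nonzero element squares to 1.  A point of X comes from a torus
   point f via the edge values u_k = f_k f_(k+1), and a degree-d monomial,
   normalized by t_1^d, takes there the value prod_(k in A) u_k / u_1^d, where A
   is the set of variables with odd exponent; this is independent of the chosen
   representative because |A| = d (mod 2).  Such A range over the sets with
   |A| <= d and |A| = d (mod 2), and complementary sets give the same word
   because prod_k u_k = (prod_k f_k)^2 = 1.  The words of sets avoiding t_1 are
   linearly independent: the product of two of them is prod_(k in A Δ B) u_k,
   whose sum over the torus vanishes unless A = B, since negating f at a vertex
   where the edge set A Δ B ends flips its sign.  Counting these sets gives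
   2^(s-2) when s <= 2d + 2; otherwise replacing A by the smaller of A and its
   complement matches them with the sets of size d, d - 2, .... *)

Lemma val_iter_ordS n m (j : 'I_n) : iter m (@ordS n) j = ((j + m) %% n)%N :> nat.
Proof.
elim: m => [|m IHm] /=; first by rewrite addn0 modn_small.
by rewrite IHm /= -addn1 modnDml addn1 addnS.
Qed.

Lemma ordS_closed_setT n (C : {set 'I_n}) (j : 'I_n) :
  j \in C -> {in C, forall k, ordS k \in C} -> C = setT.
Proof.
move=> Cj closedC; apply/setP => k; rewrite inE.
have -> : k = iter (k + n - j) (@ordS n) j.
  apply: val_inj => /=; rewrite val_iter_ordS.
  have := ltn_ord j; have := ltn_ord k => kn jn.
  by rewrite addnBA ?addKn ?modnDr ?modn_small //; lia.
by elim: (k + n - j)%N => //= m; apply: closedC.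
Qed.

Lemma exists_ordS_exit n (C : {set 'I_n}) :
  C != set0 -> C != setT -> exists2 j, j \in C & ordS j \notin C.
Proof.
case/set0Pn=> j0 Cj0 CT.
case: (boolP [exists j, (j \in C) && (ordS j \notin C)]).
  by case/existsP=> j /andP[]; exists j.
rewrite negb_exists => /forallP noexit.
case/eqP: CT; apply: (ordS_closed_setT Cj0) => j Cj.
by move: (noexit j); rewrite Cj negbK.
Qed.

Section TorusEdgeProducts.
Variables (F : finFieldType) (n : nat).

Definition torus := [pred f : {ffun 'I_n -> F} | [forall k, f k != 0]].

Definition edge_val (f : {ffun 'I_n -> F}) (k : 'I_n) : F := f k * f (ordS k).

Lemma card_torus : #|torus| = (#|F|.-1 ^ n)%N.
Proof.
rewrite -(cardC1 (0 : F)) -[in RHS](card_ord n) -card_ffun_on.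
by apply: eq_card => f; rewrite !inE.
Qed.

Lemma edge_val_neq0 f k : f \in torus -> edge_val f k != 0.
Proof. by rewrite inE => /forallP f_neq0; rewrite mulf_neq0. Qed.

Definition negate_at (q : 'I_n) (f : {ffun 'I_n -> F}) : {ffun 'I_n -> F} :=
  [ffun k => if k == q then - f k else f k].

Lemma negate_atK q : involutive (negate_at q).
Proof.
by move=> f; apply/ffunP => k; rewrite !ffunE; case: eqP; rewrite ?opprK.
Qed.

Lemma negate_at_torus q f : (negate_at q f \in torus) = (f \in torus).
Proof.
rewrite !inE; apply/forallP/forallP => f_neq0 k; move: (f_neq0 k); rewrite /negate_at !ffunE;
  by case: (k == q); rewrite ?oppr_eq0.
Qed.

Lemma prod_edge_val_negate_at (C : {set 'I_n}) j f :
  j \in C -> ordS j \notin C ->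
  \prod_(k in C) edge_val (negate_at (ordS j) f) k = - \prod_(k in C) edge_val f k.
Proof.
move=> Cj Cq; rewrite (bigD1 j) //= [in RHS](bigD1 j) //= -mulNr.
have neq_q k : k \in C -> (k == ordS j) = false.
  by move=> Ck; apply: contraNF Cq => /eqP <-.
congr (_ * _); first by rewrite /edge_val !ffunE neq_q // eqxx mulrN.
apply: eq_bigr => k /andP[Ck k_neq_j].
by rewrite /edge_val !ffunE neq_q // (inj_eq (@ordS_inj n)) (negbTE k_neq_j).
Qed.

Lemma prod_edge_val f : \prod_k edge_val f k = (\prod_k f k) ^+ 2.
Proof.
have shift : \prod_k f (ordS k) = \prod_k f k.
  by rewrite [RHS](reindex_inj (@ordS_inj n)).
by rewrite big_split /= shift expr2.
Qed.

Hypothesis two_neq0 : 2 != 0 :> F.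

Lemma sum_torus_prod_edge_val_eq0 (C : {set 'I_n}) :
  C != set0 -> C != setT -> \sum_(f in torus) \prod_(k in C) edge_val f k = 0.
Proof.
move=> C_neq0 C_neqT; have [j Cj Cq] := exists_ordS_exit C_neq0 C_neqT.
set S := (X in X = 0).
have S_opp : S = - S.
  rewrite {1}/S (reindex_inj (inv_inj (negate_atK (ordS j)))) /= -sumrN.
  apply: eq_big => [f | f _]; first by rewrite negate_at_torus.
  exact: prod_edge_val_negate_at.
have : S *+ 2 = 0 by rewrite mulr2n {1}S_opp addNr.
by rewrite -mulr_natr => /eqP; rewrite mulf_eq0 (negbTE two_neq0) orbF => /eqP.
Qed.

End TorusEdgeProducts.

Section SymDiff.
Variable T : finType.
Implicit Types A B D : {set T}.

Definition symdiff A B : {set T} := (A :\: B) :|: (B :\: A).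

Lemma in_symdiff x A B : (x \in symdiff A B) = (x \in A) (+) (x \in B).
Proof. by rewrite !inE; case: (x \in A); case: (x \in B). Qed.

Lemma symdiffvv A : symdiff A A = set0.
Proof. by apply/setP => x; rewrite in_symdiff addbb inE. Qed.

Lemma symdiffvC A : symdiff A (~: A) = setT.
Proof. by apply/setP => x; rewrite in_symdiff !inE addbN addbb. Qed.

Lemma symdiffK B : involutive (symdiff^~ B).
Proof. by move=> A; apply/setP => x; rewrite !in_symdiff addbK. Qed.

Lemma symdiff_eq0 A B : (symdiff A B == set0) = (A == B).
Proof.
apply/eqP/eqP => [/setP AB | ->]; last exact: symdiffvv.
by apply/setP => x; move: (AB x); rewrite in_symdiff inE; case: (x \in A); case: (x \in B).
Qed.

Lemma disjoint_setD_sym A B : [disjoint A :\: B & B :\: A].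
Proof. by apply/pred0P => x /=; rewrite !inE; case: (x \in A); case: (x \in B). Qed.

Lemma symdiff_sub A B D : A \subset D -> B \subset D -> symdiff A B \subset D.
Proof.
by move=> AD BD; rewrite subUset !(subset_trans (subsetDl _ _)).
Qed.

Lemma odd_card_symdiff A B : odd #|symdiff A B| = odd #|A| (+) odd #|B|.
Proof.
rewrite /symdiff cardsU (disjoint_setI0 (disjoint_setD_sym A B)) cards0 subn0 oddD.
rewrite !cardsD !oddB ?subset_leq_card ?subsetIl // setIC.
by rewrite addbACA addbb addbF.
Qed.

Lemma prod_symdiff (R : comRingType) (F : T -> R) A B :
  (forall x, F x * F x = 1) ->
  (\prod_(x in A) F x) * (\prod_(x in B) F x) = \prod_(x in symdiff A B) F x.
Proof.
move=> FF1; rewrite (big_setID B) [X in _ * X](big_setID A) setIC.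
rewrite mulrACA -big_split big1 ?mul1r //= -bigU /= ?disjoint_setD_sym //.
by apply: eq_bigl => x; rewrite !inE.
Qed.

End SymDiff.

Arguments symdiff {T} A B.

Lemma card_in_bij (T U : finType) (S1 : {set T}) (S2 : {set U})
    (f : T -> U) (g : U -> T) :
  {in S1, forall x, f x \in S2} -> {in S2, forall y, g y \in S1} ->
  {in S1, cancel f g} -> {in S2, cancel g f} -> #|S1| = #|S2|.
Proof.
move=> fS1 gS2 fK gK; rewrite -(card_in_imset (can_in_inj fK)).
apply: eq_card => y; apply/imsetP/idP => [[x S1x ->] | S2y]; first exact: fS1.
by exists (g y); rewrite ?gK ?gS2.
Qed.

Lemma sum_eq_sub_double d k :
  (\sum_(i < d./2.+1) (k == d - i.*2 : nat))%N = ((k <= d) && (odd k == odd d))%N.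
Proof.
have [/andP[kd par] | not_kd] := boolP ((k <= d)%N && (odd k == odd d)); last first.
  rewrite big1 // => i _; apply/eqP; rewrite eqb0; apply: contra not_kd => /eqP ->.
  by apply/andP; split; [lia | apply/eqP; have := ltn_ord i; lia].
have i0_lt : ((d - k)./2 < d./2.+1)%N by lia.
rewrite (bigD1 (Ordinal i0_lt)) //= big1 ?addn0; first by apply/eqP; lia.
move=> i /eqP i_neq; apply/eqP; rewrite eqb0; apply/eqP => k_eq; apply: i_neq.
by apply: val_inj => /=; have := ltn_ord i; lia.
Qed.

Section ParitySets.
Variable T : finType.

Lemma card_powerset_parity (D : {set T}) (a : T) (p : bool) : a \in D ->
  (#|[set A in powerset D | odd #|A| == p]|).*2 = (2 ^ #|D|)%N.
Proof.
move=> Da; set E := [set A : {set T} | odd #|A| == p].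
have -> : [set A in powerset D | odd #|A| == p] = powerset D :&: E.
  by apply/setP => A; rewrite !inE.
have toggle_a : #|powerset D :&: E| = #|powerset D :\: E|.
  have tK : involutive (symdiff^~ [set a]) := @symdiffK T [set a].
  apply: (@card_in_bij _ _ _ _ _ _ _ _ (in1W tK) (in1W tK)) => A;
    rewrite !inE odd_card_symdiff cards1 addbT => /andP[].
    by move=> sAD /eqP <-; rewrite symdiff_sub ?sub1set // andbT; case: (odd #|A|).
  by rewrite negb_eqb => /addbP <- sAD; rewrite symdiff_sub ?sub1set ?eqxx.
by rewrite -addnn {2}toggle_a cardsID card_powerset.
Qed.

Lemma odd_card_setC (A : {set T}) : ~~ odd #|T| -> odd #|~: A| = odd #|A|.
Proof.
by rewrite -(cardsC A) oddD; case: (odd #|A|); case: (odd #|~: A|).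
Qed.

Lemma card_small_parity_sets d :
  #|[set A : {set T} | (#|A| <= d)%N && (odd #|A| == odd d)]| =
  (\sum_(i < d./2.+1) 'C(#|T|, d - i.*2))%N.
Proof.
rewrite -sum1_card big_mkcond /=.
rewrite (eq_bigr (fun A : {set T} => \sum_(i < d./2.+1) (#|A| == d - i.*2 : nat))%N); last first.
  by move=> A _; rewrite sum_eq_sub_double inE; case: (_ && _).
rewrite exchange_big /=; apply: eq_bigr => i _.
by rewrite -card_draws -sum1_card [RHS]big_mkcond; apply: eq_bigr => A _; rewrite inE.
Qed.

End ParitySets.

Lemma F3_mul_self (a : K) : a != 0 -> a * a = 1.
Proof. by case: a => [[|[|[|i]]] ?] //= _; apply: val_inj. Qed.

Lemma F3_expr_odd (a : K) m : a != 0 -> a ^+ m = a ^+ odd m.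
Proof.
move=> a_neq0; rewrite -{1}(odd_double_half m) exprD -mul2n exprM expr2.
by rewrite F3_mul_self // expr1n mulr1.
Qed.

Lemma cycle_vecE n (f : 'I_n.+1 -> K) k : cycle_vec f 0 k = f k * f (ordS k).
Proof. by rewrite mxE; congr (_ * f _); apply: val_inj. Qed.

Section Codewords.
Variables n d : nat.
Implicit Types (A B : {set 'I_n.+1}) (f : {ffun 'I_n.+1 -> K}).

Definition sqfree_eval A (v : 'rV[K]_n.+1) : K :=
  (\prod_(k in A) v 0 k) / v 0 ord0 ^+ d.

Lemma sqfree_eval_scale A v c :
  c != 0 -> odd #|A| = odd d -> sqfree_eval A (c *: v) = sqfree_eval A v.
Proof.
move=> c_neq0 parA; rewrite /sqfree_eval mxE exprMn.
under eq_bigr do rewrite mxE.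
rewrite prodrMl [c ^+ #|A|]F3_expr_odd // parA -F3_expr_odd //.
by rewrite invfM mulrACA divff ?expf_neq0 // mul1r.
Qed.

Lemma sqfree_eval_cycle_vec A f : sqfree_eval A (cycle_vec f) =
  (\prod_(k in A) edge_val f k) / edge_val f ord0 ^+ d.
Proof. by rewrite /sqfree_eval cycle_vecE; under eq_bigr do rewrite cycle_vecE. Qed.

Lemma sqfree_eval_cycle_vec_mul A B f : f \in torus K n.+1 ->
  sqfree_eval A (cycle_vec f) * sqfree_eval B (cycle_vec f) =
  \prod_(k in symdiff A B) edge_val f k.
Proof.
move=> torus_f; rewrite !sqfree_eval_cycle_vec mulf_div -exprMn.
rewrite F3_mul_self ?edge_val_neq0 // expr1n divr1.
by apply: prod_symdiff => k; rewrite F3_mul_self ?edge_val_neq0.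
Qed.

Lemma sqfree_eval_cycle_vec_setC A f : f \in torus K n.+1 ->
  sqfree_eval (~: A) (cycle_vec f) = sqfree_eval A (cycle_vec f).
Proof.
move=> torus_f; have prodT : \prod_k edge_val f k = 1.
  rewrite prod_edge_val expr2 F3_mul_self //; apply/prodf_neq0 => k _.
  by move: torus_f; rewrite inE => /forallP.
have := sqfree_eval_cycle_vec_mul A (~: A) torus_f.
rewrite symdiffvC (eq_bigl xpredT) ?prodT => [AAc|k]; last by rewrite inE.
have := sqfree_eval_cycle_vec_mul A A torus_f; rewrite symdiffvv big_set0 => AA.
by rewrite -[LHS]mul1r -AA -mulrA AAc mulr1.
Qed.

Lemma sum_torus_sqfree_eval_mul A B : ord0 \notin A -> ord0 \notin B ->
  \sum_(f in torus K n.+1) sqfree_eval A (cycle_vec f) * sqfree_eval B (cycle_vec f) =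
  if A == B then (2 ^ n.+1)%:R else 0.
Proof.
move=> A0 B0; under eq_bigr => f torus_f do rewrite sqfree_eval_cycle_vec_mul //.
case: eqP => [<- | /eqP A_neq_B].
  under eq_bigr do rewrite symdiffvv big_set0.
  by rewrite sumr_const card_torus card_Fp.
apply: sum_torus_prod_edge_val_eq0 => //; first by rewrite symdiff_eq0.
by apply/eqP => /setP/(_ ord0); rewrite in_symdiff !inE (negbTE A0) (negbTE B0).
Qed.

End Codewords.

Section PointsOfX.
Variable n : nat.

Lemma mem_Xcyc (f : {ffun 'I_n.+1 -> K}) :
  f \in torus K n.+1 -> pclass (cycle_vec f) \in Xcyc n.
Proof.
rewrite inE => /forallP f_neq0; apply/imsetP; exists (\row_i f i).
  by rewrite inE; apply/forallP => i; rewrite mxE.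
by congr pclass; apply/rowP => k; rewrite !mxE.
Qed.

Lemma XcycP (P : {set 'rV[K]_n.+1}) : P \in Xcyc n ->
  exists2 f : {ffun 'I_n.+1 -> K}, f \in torus K n.+1 & P = pclass (cycle_vec f).
Proof.
case/imsetP=> x; rewrite inE => /forallP x_neq0 ->.
exists [ffun i => x 0 i]; first by rewrite inE; apply/forallP => i; rewrite ffunE.
by congr pclass; apply/rowP => k; rewrite !mxE !ffunE.
Qed.

Lemma prep_pclass s (v : 'rV[K]_s) : exists2 c, c != 0 & prep (pclass v) = c *: v.
Proof.
rewrite /prep; case: pickP => [w | /(_ v)].
  by rewrite inE => /existsP[c /andP[c_neq0 /eqP ->]]; exists c.
by move/negbT; rewrite inE negb_exists => /forallP/(_ 1); rewrite scale1r eqxx.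
Qed.

Lemma prep_enum_val (i : 'I_#|Xcyc n|) :
  exists2 f, f \in torus K n.+1 &
  exists2 c, c != 0 & prep (enum_val i) = c *: cycle_vec f.
Proof.
have [f torus_f ->] := XcycP (enum_valP i).
by exists f => //; apply: prep_pclass.
Qed.

Lemma enum_val_cycle_vec (f : {ffun 'I_n.+1 -> K}) : f \in torus K n.+1 ->
  exists i : 'I_#|Xcyc n|, exists2 c, c != 0 & prep (enum_val i) = c *: cycle_vec f.
Proof.
move/mem_Xcyc=> Xf; exists (enum_rank_in Xf (pclass (cycle_vec f))).
by rewrite enum_rankK_in //; apply: prep_pclass.
Qed.

End PointsOfX.

Section CodewordSpan.
Variables n d : nat.
Implicit Types (A B : {set 'I_n.+1}) (f : {ffun 'I_n.+1 -> K}).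

Definition codeword A : 'rV[K]_#|Xcyc n| :=
  \row_i sqfree_eval d A (prep (enum_val i)).

Lemma codeword_entry (i : 'I_#|Xcyc n|) : exists2 f, f \in torus K n.+1 &
  forall A, odd #|A| = odd d -> codeword A 0 i = sqfree_eval d A (cycle_vec f).
Proof.
have [f torus_f [c c_neq0 prep_i]] := prep_enum_val i.
by exists f => // A parA; rewrite mxE prep_i sqfree_eval_scale.
Qed.

Lemma codeword_at_torus f : f \in torus K n.+1 -> exists i : 'I_#|Xcyc n|,
  forall A, odd #|A| = odd d -> codeword A 0 i = sqfree_eval d A (cycle_vec f).
Proof.
case/enum_val_cycle_vec=> i [c c_neq0 prep_i].
by exists i => A parA; rewrite mxE prep_i sqfree_eval_scale.
Qed.

Lemma codeword_setC A : ~~ odd n.+1 -> odd #|A| = odd d -> codeword (~: A) = codeword A.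
Proof.
move=> even_s parA; have parAc : odd #|~: A| = odd d.
  by rewrite odd_card_setC ?card_ord.
apply/rowP => i; have [f torus_f codeword_i] := codeword_entry i.
by rewrite !codeword_i // sqfree_eval_cycle_vec_setC.
Qed.

Definition odd_support (m : 'X_{1..n.+1}) : {set 'I_n.+1} := [set k | odd (m k)].

Lemma evX_mnm (m : 'X_{1..n.+1}) : evX d 'X_[m] = codeword (odd_support m).
Proof.
apply/rowP => i; rewrite !mxE /= mevalX /sqfree_eval; congr (_ / _).
have [f torus_f [c c_neq0 ->]] := prep_enum_val i.
rewrite [RHS]big_mkcond /=; apply: eq_bigr => k _.
have v_neq0 : (c *: cycle_vec f) 0 k != 0.
  by rewrite mxE cycle_vecE mulf_neq0 ?edge_val_neq0.
by rewrite F3_expr_odd // inE; case: (odd (m k)).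
Qed.

Lemma evXD (p q : {mpoly K[n.+1]}) : evX d (p + q) = evX d p + evX d q.
Proof. by apply/rowP => i; rewrite !mxE /= mevalD mulrDl. Qed.

Lemma evXZ a (p : {mpoly K[n.+1]}) : evX d (a *: p) = a *: evX d p.
Proof. by apply/rowP => i; rewrite !mxE /= mevalZ mulrA. Qed.

Lemma evX_sum (I : Type) (r : seq I) (P : pred I) (F : I -> {mpoly K[n.+1]}) :
  evX d (\sum_(i <- r | P i) F i) = \sum_(i <- r | P i) evX d (F i).
Proof.
by apply: (big_morph _ evXD); apply/rowP => i; rewrite !mxE /= meval0 mul0r.
Qed.

Lemma card_odd_support_le (m : 'X_{1..n.+1}) : (#|odd_support m| <= mdeg m)%N.
Proof.
rewrite mdegE -sum1_card big_mkcond /=; apply: leq_sum => k _.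
by rewrite inE; case: ifP => // /odd_gt0.
Qed.

Lemma odd_card_odd_support (m : 'X_{1..n.+1}) : odd #|odd_support m| = odd (mdeg m).
Proof.
rewrite mdegE (eq_bigr (fun k => odd (m k) + (m k)./2 * 2)%N); last first.
  by move=> k _; rewrite muln2 odd_double_half.
rewrite big_split -big_distrl /= oddD oddM andbF addbF -sum1_card big_mkcond /=.
by congr odd; apply: eq_bigr => k _; rewrite inE; case: (odd (m k)).
Qed.

Definition padded_mnm B : 'X_{1..n.+1} :=
  [multinom ((k \in B) + (if k == ord0 then d - #|B| else 0))%N | k < n.+1].

Lemma mdeg_padded_mnm B : (#|B| <= d)%N -> mdeg (padded_mnm B) = d.
Proof.
move=> Bd; rewrite mdegE (eq_bigr _ (fun k _ => mnmE _ k)) big_split /=.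
by rewrite -big_mkcond /= sum1_card -big_mkcond /= big_pred1_eq subnKC.
Qed.

Lemma odd_support_padded_mnm B : (#|B| <= d)%N -> odd #|B| = odd d ->
  odd_support (padded_mnm B) = B.
Proof.
move=> Bd parB; apply/setP => k; rewrite inE mnmE oddD.
case: eqP => _; last by rewrite addbF; case: (k \in B).
by rewrite oddB // parB addbb addbF; case: (k \in B).
Qed.

(* One set of each complementary pair of odd supports, the one avoiding [ord0]. *)
Definition rep_sets : {set {set 'I_n.+1}} :=
  [set A : {set 'I_n.+1} |
    [&& ord0 \notin A, odd #|A| == odd d & (#|A| <= d)%N || (#|~: A| <= d)%N]].

Definition codeword_family := [tuple codeword (enum_val i) | i < #|rep_sets|].

Lemma free_codeword_family : free codeword_family.
Proof.
apply/freeP => k sum_eq0 j.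
have rep_enum (i : 'I_#|rep_sets|) : ord0 \notin enum_val i /\ odd #|enum_val i| = odd d.
  by have := enum_valP i; rewrite inE => /and3P[? /eqP].
have at_torus f : f \in torus K n.+1 ->
    \sum_i k i * sqfree_eval d (enum_val i) (cycle_vec f) = 0.
  case/codeword_at_torus=> x codeword_x.
  have := congr1 (fun M : 'rV_#|Xcyc n| => M 0 x) sum_eq0.
  rewrite summxE mxE => sum_x; rewrite -[RHS]sum_x.
  apply: eq_bigr => i _; rewrite mxE nth_mktuple codeword_x //; exact: (rep_enum i).2.
have : \sum_(f in torus K n.+1) sqfree_eval d (enum_val j) (cycle_vec f) *
         \sum_i k i * sqfree_eval d (enum_val i) (cycle_vec f) = 0.
  by rewrite big1 // => f /at_torus ->; rewrite mulr0.
under eq_bigr do rewrite mulr_sumr.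
rewrite exchange_big /=.
under eq_bigr do under eq_bigr do rewrite mulrCA.
under eq_bigr => i _ do
  rewrite -mulr_sumr sum_torus_sqfree_eval_mul ?(rep_enum j).1 ?(rep_enum i).1 //
          (inj_eq enum_val_inj).
rewrite (bigD1 j) //= eqxx big1 => [|i i_neq_j]; last by rewrite eq_sym (negbTE i_neq_j) mulr0.
by rewrite addr0 => /eqP; rewrite mulf_eq0 natrX expf_eq0 orbF => /eqP.
Qed.

Lemma dim_span_codeword_family : \dim <<codeword_family>> = #|rep_sets|.
Proof. by rewrite (eqP free_codeword_family) size_tuple. Qed.

Lemma codeword_rep_mem_span A : A \in rep_sets -> codeword A \in <<codeword_family>>%VS.
Proof.
move=> repA; apply: memv_span.
have -> : codeword A = tnth codeword_family (enum_rank_in repA A).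
  by rewrite tnth_mktuple enum_rankK_in.
exact: mem_tnth.
Qed.

Hypothesis even_s : ~~ odd n.+1.

Lemma codeword_mem_span B : (#|B| <= d)%N -> odd #|B| = odd d ->
  codeword B \in <<codeword_family>>%VS.
Proof.
move=> Bd parB; have [B0 | B0] := boolP (ord0 \in B).
  rewrite -codeword_setC //; apply: codeword_rep_mem_span.
  by rewrite inE !inE B0 odd_card_setC ?card_ord // parB eqxx setCK Bd orbT.
by apply: codeword_rep_mem_span; rewrite inE B0 parB eqxx Bd.
Qed.

Definition rep_mnm A : 'X_{1..n.+1} :=
  if (#|A| <= d)%N then padded_mnm A else padded_mnm (~: A).

Lemma rep_mnmP A : A \in rep_sets ->
  mdeg (rep_mnm A) = d /\ evX d 'X_[rep_mnm A] = codeword A.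
Proof.
rewrite inE => /and3P[_ /eqP parA small]; rewrite /rep_mnm evX_mnm.
case: ifPn => [Ad | /negbTE Ad]; first by rewrite mdeg_padded_mnm ?odd_support_padded_mnm.
have parAc : odd #|~: A| = odd d by rewrite odd_card_setC ?card_ord.
move: small; rewrite Ad /= => Acd.
by rewrite mdeg_padded_mnm ?odd_support_padded_mnm ?codeword_setC.
Qed.

Lemma in_CX_span c : c \in <<codeword_family>>%VS <-> in_CX d c.
Proof.
split=> [/coord_span -> | [p [homog_p ->]]].
  exists (\sum_i coord codeword_family i c *: 'X_[rep_mnm (enum_val i)]); split.
    apply: rpred_sum => i _; apply: rpredZ; rewrite dhomogX.
    by apply/eqP; exact: (rep_mnmP (enum_valP i)).1.
  rewrite evX_sum; apply: eq_bigr => i _.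
  by rewrite evXZ nth_mktuple (rep_mnmP (enum_valP i)).2.
rewrite (mpolyE p) evX_sum big_seq; apply: memv_suml => m supp_m.
have deg_m : mdeg m = d := dhomog_mf homog_p supp_m.
rewrite evXZ evX_mnm; apply/memvZ/codeword_mem_span;
  by rewrite -deg_m ?card_odd_support_le ?odd_card_odd_support.
Qed.

End CodewordSpan.

Section RepSetsCount.
Variables n d : nat.

Lemma rep_sets_large : (n.+1 <= d.*2.+2)%N ->
  rep_sets n d = [set A in powerset [set~ ord0] | odd #|A| == odd d].
Proof.
move=> s_le; apply/setP => A; rewrite !inE subsetC sub1set !inE.
case: (ord0 \in A) => //=; case: eqP => //= parA; apply/orP.
case: (leqP #|A| d) => [| ltA]; [by left | right; rewrite leqNgt; apply/negP => ltAc].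
have := leq_add (leqnn #|A|) ltAc; rewrite cardsC card_ord => A_le.
have Ad : #|A| = d.+1 by lia.
by move: parA; rewrite Ad /=; case: (odd d).
Qed.

Lemma card_rep_sets_large : (0 < n)%N -> (n.+1 <= d.*2.+2)%N ->
  (#|rep_sets n d|).*2 = (2 ^ n)%N.
Proof.
move=> n_gt0 s_le; have max_neq0 : ord_max \in [set~ (ord0 : 'I_n.+1)].
  by rewrite !inE -val_eqE /= -lt0n.
by rewrite rep_sets_large // (card_powerset_parity _ max_neq0) cardsC1 card_ord.
Qed.

Lemma card_rep_sets_small : ~~ odd n.+1 -> (d.*2 < n.+1)%N ->
  #|rep_sets n d| = #|[set A : {set 'I_n.+1} | (#|A| <= d)%N && (odd #|A| == odd d)]|.
Proof.
move=> even_s s_gt; have parC (A : {set 'I_n.+1}) : odd #|~: A| = odd #|A|.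
  by rewrite odd_card_setC ?card_ord.
pose small (A : {set 'I_n.+1}) := if (#|A| <= d)%N then A else ~: A.
pose avoid0 (B : {set 'I_n.+1}) := if ord0 \in B then ~: B else B.
apply: (@card_in_bij _ _ _ _ small avoid0) => [A|B|A|B]; rewrite !inE.
- case/and3P=> _ /eqP parA; rewrite /small; case: ifP => [-> | _ /= Acd].
    by rewrite parA eqxx.
  by rewrite Acd parC parA eqxx.
- case/andP=> Bd /eqP parB; rewrite /avoid0; case: ifP => B0.
    by rewrite !inE B0 parC parB eqxx setCK Bd orbT.
  by rewrite B0 parB eqxx Bd.
- case/and3P=> A0 _ _; rewrite /small; case: ifP => _; rewrite /avoid0.
    by rewrite (negbTE A0).
  by rewrite inE A0 setCK.
- case/andP=> Bd _; rewrite /avoid0; case: ifP => _; rewrite /small; last by rewrite Bd.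
  have -> : (#|~: B| <= d)%N = false.
    by apply/negbTE; rewrite -ltnNge -(ltn_add2l #|B|) cardsC card_ord; lia.
  by rewrite setCK.
Qed.

End RepSetsCount.

Theorem theorem2p5 (l : nat) (hl : (2 <= l)%N) (d : nat) :
  exists V : {vspace 'rV[K]_#|Xcyc (l.*2).-1|},
    (forall c, c \in V <-> @in_CX (l.*2).-1 d c) /\
    \dim V = (if (l.-1 <= d)%N then 2 ^ (l.*2 - 2)
              else \sum_(i < d./2.+1) 'C(l.*2, d - i.*2))%N.
Proof.
set n := (l.*2).-1.
have s_eq : n.+1 = l.*2 by rewrite prednK // double_gt0; lia.
have even_s : ~~ odd n.+1 by rewrite s_eq odd_double.
exists <<codeword_family n d>>%VS; split; first by move=> c; apply: in_CX_span.
rewrite dim_span_codeword_family; case: ifP => [large | /negbT small].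
  have n_eq : n = (l.*2 - 2).+1 by lia.
  by apply: double_inj; rewrite card_rep_sets_large ?n_eq ?expnS ?mul2n //; lia.
by rewrite card_rep_sets_small ?card_small_parity_sets ?card_ord ?s_eq //; lia.
Qed.
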